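(* Consider a smoothed online classification problem on a measure space $(\mathcal{X},\nu)$ with $\nu$ a finite measure and concept $c$. Suppose the learner's prediction strategy $\mathcal{A}$ is online locally consistent (OLC) with respect to $c$ and the adversary is $\nu$-dominated. Then $$\lim_{T\to\infty}\frac1T\sum_{t=1}^T\ell(x_t,y_t,\hat y_t)=0\quad\text{almost surely}.$$
   Context: The loss $\ell(x,y,\hat y)$ is non-negative, bounded, with $\ell(x,y,y)=0$. Protocol: adversary fixes $c:\mathcal{X}\to\mathcal{Y}$ knowing $\mathcal{A}$; at each $t$ selects a distribution $\mu_t$ (possibly history-dependent), draws $x_t\sim\mu_t$; learner predicts $\hat y_t=h_t(x_t)$; $y_t=c(x_t)$. A prediction strategy $\mathcal{A}$ maps past data $\{(x_\tau,y_\tau)\}_{\tau\le t}$ to a hypothesis $h_{t+1}:\mathcal{X}\to\mathcal{Y}$; its error function at time $t$ is $\mathcal{E}_t(x)=\ell(x,c(x),h_t(x))$. A set $U\subset\mathcal{X}$ is locally learned for $c$ by $\mathcal{A}$ if for every sequence of instances $(x_t)_t$ (labeled by $c$), either $x_t\in U$ for only finitely many $t$, or $\sup_{x\in U}\mathcal{E}_t(x)\to0$. $\mathcal{A}$ is OLC for $c$ if there is a countable collection of locally learned sets for $c$ whose union covers $\mathcal{X}$ up to a $\nu$-null set. $\nu$ uniformly dominates a family $\mathcal{M}$ if for all $\epsilon>0$ there is $\delta>0$ with $\nu(A)<\delta\Rightarrow\mu(A)<\epsilon$ for all measurable $A$ and $\mu\in\mathcal{M}$; a $\nu$-dominated adversary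 always selects $\mu_t$ from such a family. *)

From HB Require Import structures.
From mathcomp Require Import all_boot all_order all_algebra.
From mathcomp Require Import all_classical all_reals all_analysis measurable_realfun.
Set Implicit Arguments. Unset Strict Implicit. Unset Printing Implicit Defensive.
Import Order.TTheory GRing.Theory Num.Theory.
Import numFieldNormedType.Exports.
Local Open Scope classical_set_scope.
Local Open Scope ring_scope.

Section SmoothedOnline.
Context {X Y : Type} (R : realType).

Definition lhist (c : X -> Y) (xs : nat -> X) (t : nat) : seq (X * Y) :=
  [seq (xs s, c (xs s)) | s <- iota 0 t].

Definition hyp (A : seq (X * Y) -> X -> Y) (c : X -> Y) (xs : nat -> X) (t : nat)
  : X -> Y := A (lhist c xs t).

Definition err (l : X -> Y -> Y -> R) (A : seq (X * Y) -> X -> Y) (c : X -> Y)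
  (xs : nat -> X) (t : nat) (x : X) : R := l x (c x) (hyp A c xs t x).

Definition locally_learned (l : X -> Y -> Y -> R) (A : seq (X * Y) -> X -> Y)
  (c : X -> Y) (U : set X) : Prop :=
  forall xs : nat -> X,
    finite_set [set t | U (xs t)] \/
    ((fun t => ereal_sup [set (err l A c xs t x)%:E | x in U]) @ \oo --> 0%E).

End SmoothedOnline.

Section OLC.
Context {d : measure_display} {X : measurableType d} {Y : Type} (R : realType).

Definition OLC (nu : {measure set X -> \bar R}) (l : X -> Y -> Y -> R)
  (A : seq (X * Y) -> X -> Y) (c : X -> Y) : Prop :=
  exists U : nat -> set X,
    (forall i, measurable (U i)) /\
    (forall i, locally_learned l A c (U i)) /\
    nu.-negligible (~` \bigcup_i U i).

Definition uniformly_dominates (nu : {measure set X -> \bar R})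
  (M : set (probability X R)) : Prop :=
  forall e : R, 0 < e -> exists2 delta : R, 0 < delta &
    forall B, measurable B -> (nu B < delta%:E)%E ->
      forall mu, M mu -> (mu B < e%:E)%E.

Definition hist_sigma {d' : measure_display} {Omega : measurableType d'}
  (x : nat -> Omega -> X) (t : nat) : set (set Omega) :=
  <<s [set E | exists s B, (s < t)%N /\ measurable B /\ E = x s @^-1` B] >>.

(* The random process x is generated by the (history-dependent) adversary adv:
   conditionally on x_0..x_{t-1}, x_t is distributed as adv [x_0;..;x_{t-1}]. *)
Definition generated_by {d' : measure_display} {Omega : measurableType d'}
  (P : probability Omega R) (adv : seq X -> probability X R)
  (x : nat -> Omega -> X) : Prop :=
  (forall t, measurable_fun setT (x t)) /\
  (forall t B, measurable B ->
     measurable_fun setT (fun w => adv [seq x s w | s <- iota 0 t] B)) /\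
  (forall t E B, hist_sigma x t E -> measurable B ->
     P (E `&` x t @^-1` B) =
     (\int[P]_(w in E) adv [seq x s w | s <- iota 0 t] B)%E).

End OLC.

From HB Require Import structures.
From mathcomp Require Import all_boot all_order all_algebra.
From mathcomp Require Import all_classical all_reals all_analysis measurable_realfun.
From mathcomp Require Import ring lra.
Import Order.TTheory GRing.Theory Num.Theory.
Import numFieldNormedType.Exports.
Local Open Scope classical_set_scope.
Local Open Scope ring_scope.

(* Fix an outcome w and write a_t for the loss suffered at
   time t; the a_t are nonnegative and bounded by some M.  Deterministically
   (Lemma cesaro_vanish), the averages of such a sequence vanish as soon as,
   for every e > 0, a_t is eventually at most e outside a set of "bad" times
   whose counting function is eventually at most e T / M.
   OLC supplies the bad times.  If U_0, U_1, ... are the locally learned sets,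
   the loss at x_t is eventually small whenever x_t lies in U_0, ..., U_{K-1}
   (Lemma covered_loss_small); so the bad times are the visits of the process
   to [uncovered U K], the complement of these sets.  Continuity from above of
   the finite measure nu and uniform domination make [uncovered U K] of mass
   at most 8^-(q+1) for every law chosen by the adversary, once K is large
   (Lemma uniform_small_uncovered).  Finally, for a process whose conditional
   laws all give a set S mass at most eps, a prescribed set J of visit times
   has probability at most eps^|J| (Lemma prob_all_visits_le); a union bound
   over J shows that visiting S at frequency >= 1/(q+1) up to time n has
   probability at most 2^-n when eps <= 8^-(q+1), and Borel-Cantelli makes the
   visit frequency eventually < 1/(q+1) almost surely (Lemma rare_visits_ae).
   Intersecting these countably many almost sure events over q concludes. *)

Section history_sigma.
Context {d : measure_display} {X : measurableType d}.
Context {d' : measure_display} {Omega : measurableType d'}.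
Variable x : nat -> Omega -> X.

Lemma hist_sigma_preimage t s B :
  (s < t)%N -> measurable B -> hist_sigma x t (x s @^-1` B).
Proof. by move=> st mB; apply: sub_sigma_algebra; exists s, B. Qed.

(* [hist_sigma x t] is the family of measurable sets of a
   [g_sigma_algebraType], so the closure properties of measurable sets apply. *)
Lemma hist_sigmaT t : hist_sigma x t setT.
Proof. exact: (@measurableT _ (g_sigma_algebraType _)). Qed.

Lemma hist_sigmaI t E F :
  hist_sigma x t E -> hist_sigma x t F -> hist_sigma x t (E `&` F).
Proof. exact: (@measurableI _ (g_sigma_algebraType _)). Qed.

Lemma hist_sigma_measurable t E : (forall s, measurable_fun setT (x s)) ->
  hist_sigma x t E -> measurable E.
Proof.
move=> mx; apply: smallest_sub; first exact: sigma_algebra_measurable.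
by move=> F [s [B [_ [mB ->]]]]; rewrite -[_ @^-1` _]setTI; apply: mx.
Qed.

End history_sigma.

Lemma measure_fin_union_le {d} {T : measurableType d} {R : realType}
  (mu : {measure set T -> \bar R}) {I : finType} {F : I -> set T} {a : R} :
  (forall i, measurable (F i)) -> (forall i, (mu (F i) <= a%:E)%E) ->
  (mu (\bigcup_i F i) <= (#|I|%:R * a)%:E)%E.
Proof.
move=> mF muF.
have mU : measurable (\bigcup_i F i).
  by apply: fin_bigcup_measurable => //; exact: finite_finset.
apply: (le_trans (content_sub_fsum mu (D := setT) finite_finset
  (fun i _ => mF i) mU _)) => //.
have -> : [set: I] = [set` enum I] by apply/seteqP; split=> i // _; rewrite /= mem_enum.
rewrite -fsbig_seq ?enum_uniq // big_enum /=.
apply: (@le_trans _ _ (\sum_(i in I) a%:E)%E); first exact: lee_sum.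
by rewrite sumEFin sumr_const mulr_natl.
Qed.

Lemma geometric_half_eseries (R : realType) :
  (\sum_(0 <= n <oo) ((2^-1) ^+ n)%:E = (2 : R)%:E)%E.
Proof.
have := @cvg_geometric_eseries_half R 2 0; rewrite expr0 divr1 => /cvg_lim <- //.
congr (limn _); apply/funext => n; apply: eq_bigr => k _; congr EFin.
by rewrite addn1 natrX exprS invfM mulrA divff ?mul1r ?exprVn.
Qed.

Section rare_visits.
Context (R : realType) {d : measure_display} {X : measurableType d}.
Context {d' : measure_display} {Omega : measurableType d'}.
Variables (P : probability Omega R) (adv : seq X -> probability X R).
Variable x : nat -> Omega -> X.
Hypothesis x_gen : generated_by P adv x.
Variables (S : set X) (eps : R).
Hypothesis mS : measurable S.
Hypothesis adv_S : forall s, (adv s S <= eps%:E)%E.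

Definition all_visits (J : seq nat) : set Omega :=
  [set w | forall s, s \in J -> S (x s w)].

Definition visit_count (T : nat) (w : Omega) : nat :=
  #|[set s : 'I_T | `[< S (x s w) >]]%SET|.

Let eps_ge0 : 0 <= eps.
Proof. by rewrite -lee_fin (le_trans _ (adv_S [::])). Qed.

Lemma prob_visit_next_le {t E} :
  hist_sigma x t E -> (P (E `&` x t @^-1` S) <= eps%:E * P E)%E.
Proof.
have [mx [madv hP]] := x_gen; move=> hE.
have mE : measurable E by exact: hist_sigma_measurable hE.
rewrite hP // -integral_cst //.
by apply: ge0_le_integral => //; exact: measurable_funS (madv t S mS).
Qed.

Lemma all_visits_eq_mem {J J'} : J =i J' -> all_visits J = all_visits J'.
Proof.
by move=> JJ'; apply/seteqP; split=> w h s sJ; apply: h; rewrite ?JJ' // -JJ'.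
Qed.

Lemma all_visits_nil : all_visits [::] = setT.
Proof. by apply/seteqP; split=> w. Qed.

Lemma all_visits_cons s J : all_visits (s :: J) = all_visits J `&` x s @^-1` S.
Proof.
apply/seteqP; split=> w h.
  by split=> [r rJ|]; apply: h; rewrite inE ?rJ ?orbT ?eqxx.
by case: h => h Sw r; rewrite inE => /predU1P[->|/h].
Qed.

Lemma hist_sigma_all_visits {t J} :
  all (fun s => s < t)%N J -> hist_sigma x t (all_visits J).
Proof.
elim: J => [_|s J IH /andP[st tJ]].
  by rewrite all_visits_nil; exact: hist_sigmaT.
by rewrite all_visits_cons; apply: hist_sigmaI; [exact: IH | exact: hist_sigma_preimage].
Qed.

(* Peeling off the visits one time at a time: a prescribed set J of visits
   has probability at most eps ^ |J|. *)
Lemma prob_all_visits_le {t J} : uniq J -> all (fun s => s < t)%N J ->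
  (P (all_visits J) <= (eps ^+ size J)%:E)%E.
Proof.
elim: t J => [|t IH] J uJ tJ.
  by case: J uJ tJ => [_ _|//]; rewrite all_visits_nil probability_setT.
have [tJt|tJt] := boolP (t \in J); last first.
  apply: IH => //; apply/allP => s sJ; move: (allP tJ s sJ).
  by rewrite ltnS leq_eqVlt => /predU1P[st|//]; rewrite -st sJ in tJt.
have J'lt : all (fun s => s < t)%N (rem t J).
  apply/allP => s; rewrite mem_rem_uniq // => /andP[st sJ].
  by move: (allP tJ s sJ); rewrite ltnS leq_eqVlt (negbTE st).
have permJ := perm_to_rem tJt.
rewrite (all_visits_eq_mem (perm_mem permJ)) (perm_size permJ) /=.
rewrite all_visits_cons exprS EFinM.
apply: (le_trans (prob_visit_next_le (hist_sigma_all_visits J'lt))).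
by apply: lee_wpmul2l; [rewrite lee_fin | exact: IH (rem_uniq t uJ) J'lt].
Qed.

(* Union bound over the sets J of at least n/(q+1) visit times before n: if
   eps <= 8^-(q+1), frequent visits up to time n have probability <= 2^-n. *)
Lemma frequent_visits_prob q n : eps <= (8^-1) ^+ q.+1 ->
  exists B : set Omega, [/\ measurable B,
    [set w | (n <= q.+1 * visit_count n w)%N] `<=` B &
    (P B <= ((2^-1) ^+ n)%:E)%E].
Proof.
move=> eps_small; have [mx _] := x_gen.
pose visits_at (J : {set 'I_n}) := all_visits (map val (enum J)).
pose B (J : {set 'I_n}) := if (n <= q.+1 * #|J|)%N then visits_at J else set0.
have visits_lt (J : {set 'I_n}) : all (fun s => s < n)%N (map val (enum J)).
  by apply/allP => _ /mapP[s _ ->]; exact: ltn_ord.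
have visits_at_hist J : hist_sigma x n (visits_at J).
  exact: hist_sigma_all_visits (visits_lt J).
have mB J : measurable (B J).
  by rewrite /B; case: ifP => // _; exact: hist_sigma_measurable (visits_at_hist J).
exists (\bigcup_J B J); split.
- by apply: fin_bigcup_measurable => //; exact: finite_finset.
- move=> w /= frequent; exists [set s : 'I_n | `[< S (x s w) >]]%SET => //.
  rewrite /B ifT // => r /mapP[s]; rewrite mem_enum inE => /asboolP Sw ->.
  exact: Sw.
- have B_le J : (P (B J) <= (8^-1 ^+ n)%:E)%E.
    rewrite /B; case: ifPn => [nJ|_]; last by rewrite measure0 lee_fin exprn_ge0.
    have uJ : uniq (map val (enum J)) by rewrite map_inj_uniq ?enum_uniq.
    apply: (le_trans (prob_all_visits_le uJ (visits_lt J))).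
    rewrite size_map -cardE lee_fin.
    apply: (@le_trans _ _ ((8^-1 ^+ q.+1) ^+ #|J|)).
      by apply: lerXn2r => //; rewrite nnegrE.
    by rewrite -exprM; apply: ler_wiXn2l => //; lra.
  apply: (le_trans (measure_fin_union_le P mB B_le)).
  rewrite lee_fin -cardsT -powersetT card_powerset cardsT card_ord natrX.
  by rewrite -exprMn; apply: lerXn2r; rewrite ?nnegrE; lra.
Qed.

(* Borel-Cantelli: almost surely the visit frequency up to time T is
   eventually below 1/(q+1). *)
Lemma rare_visits_ae q : eps <= (8^-1) ^+ q.+1 ->
  {ae P, forall w, \forall T \near \oo, (q.+1 * visit_count T w < T)%N}.
Proof.
move=> eps_small.
have /choice[B hB] := fun n => frequent_visits_prob q n eps_small.
have mB n : measurable (B n) by case: (hB n).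
exists (lim_sup_set B); split.
- by apply: bigcapT_measurable => n; apply: bigcup_measurable => j _.
- apply: lim_sup_set_cvg0 => //.
  apply: (@le_lt_trans _ _ (\sum_(0 <= n <oo) ((2^-1) ^+ n)%:E)%E).
    by apply: lee_nneseries => // n _; case: (hB n).
  by rewrite geometric_half_eseries ltry.
- move=> w /= not_eventually n _; apply: contrapT => not_later.
  apply: not_eventually; exists n => // T /= nT; rewrite ltnNge; apply/negP.
  by move=> frequent; apply: not_later; exists T => //; case: (hB T) => _ + _; apply.
Qed.

End rare_visits.

Lemma cvge0_eventually_lt {R : realType} {T : Type} {F : set_system T}
  {u : T -> \bar R} {e : R} :
  0 < e -> u @ F --> 0%E -> \forall t \near F, (u t < e%:E)%E.
Proof.
move=> e0 u0; suff : nbhs 0%E [set y : \bar R | (y < e%:E)%E] by move/u0.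
apply/nbhs_EFin; exists e => // r /= h.
by rewrite lte_fin; move: h; rewrite /ball /= sub0r normrN => /ltr_normlW.
Qed.

Section uniform_domination.
Context (R : realType) {d : measure_display} {X : measurableType d}.
Variables (nu : {finite_measure set X -> \bar R}) (U : nat -> set X).
Hypothesis mU : forall i, measurable (U i).
Hypothesis U_cover : nu.-negligible (~` \bigcup_i U i).

Definition uncovered (K : nat) : set X := ~` \bigcup_(i in `I_K) U i.

Lemma measurable_uncovered K : measurable (uncovered K).
Proof. by apply: measurableC; apply: bigcup_measurable => i _. Qed.

Lemma bigcap_uncovered : \bigcap_K uncovered K = ~` \bigcup_i U i.
Proof.
apply/seteqP; split=> w.
  by move=> h [i _ Ui]; apply: (h i.+1 I); exists i => /=.
by move=> h K _ [i _ Ui]; apply: h; exists i.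
Qed.

(* Continuity from above of the finite measure nu. *)
Lemma uncovered_measure_cvg0 : nu \o uncovered @ \oo --> 0%E.
Proof.
have <- : nu (\bigcap_K uncovered K) = 0%E.
  rewrite bigcap_uncovered; apply/negligibleP => //.
  by apply: measurableC; exact: bigcupT_measurable.
apply: nonincreasing_cvg_mu => //.
- by rewrite ltey_eq fin_num_measure //; exact: measurable_uncovered.
- exact: measurable_uncovered.
- by apply: bigcapT_measurable => K; exact: measurable_uncovered.
- move=> m n mn; apply/subsetPset => w uncov [i /= im Ui].
  by apply: uncov; exists i => //=; exact: leq_trans im mn.
Qed.

Lemma uniform_small_uncovered (M : set (probability X R)) (e : R) :
  uniformly_dominates nu M -> 0 < e ->
  exists K, forall mu, M mu -> (mu (uncovered K) <= e%:E)%E.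
Proof.
move=> dom e0; have [delta delta0 small] := dom e e0.
have [K _ nuK] := cvge0_eventually_lt delta0 uncovered_measure_cvg0.
exists K => mu Mmu; apply/ltW/small => //; first exact: measurable_uncovered.
exact: (nuK K (leqnn K)).
Qed.

End uniform_domination.

Lemma ae_forall_nat {d} {T : measurableType d} {R : realType}
  (mu : {measure set T -> \bar R}) {Q : nat -> T -> Prop} :
  (forall n, {ae mu, forall w, Q n w}) -> {ae mu, forall w, forall n, Q n w}.
Proof.
move=> aeQ; apply: (negligibleS _ (negligible_bigcup aeQ)) => w /= notQ.
apply: contrapT => notU; apply: notQ => n.
by apply: contrapT => nQ; apply: notU; exists n.
Qed.

Lemma finite_set_eventually_avoided (B : set nat) :
  finite_set B -> \forall t \near \oo, ~ B t.
Proof.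
move=> /finite_fsetP[F ->]; exists (\max_(i <- finmap.enum_fset F) i).+1 => // t /=.
rewrite ltnNge => /negP tF /= Ft; apply: tF.
exact: (@leq_bigmax_seq _ _ xpredT id t Ft).
Qed.

Section local_learning.
Context {R : realType} {X Y : Type} (l : X -> Y -> Y -> R).
Variables (A : seq (X * Y) -> X -> Y) (c : X -> Y) (xs : nat -> X).

Lemma locally_learned_loss {U : set X} {e : R} :
  locally_learned l A c U -> 0 < e ->
  \forall t \near \oo, U (xs t) -> err l A c xs t (xs t) <= e.
Proof.
move=> learned e0; case: (learned xs) => [/finite_set_eventually_avoided|sup0].
  by apply: filterS => t notU /notU.
apply: filterS (cvge0_eventually_lt e0 sup0) => t sup_lt Ut.
rewrite -lee_fin; apply: le_trans (ltW sup_lt).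
by apply: ereal_sup_ubound; exists (xs t).
Qed.

Lemma covered_loss_small (U : nat -> set X) (K : nat) (e : R) :
  (forall i, locally_learned l A c (U i)) -> 0 < e ->
  \forall t \near \oo, (\bigcup_(i in `I_K) U i) (xs t) ->
    err l A c xs t (xs t) <= e.
Proof.
move=> learned e0.
apply: filterS (filter_forall _ (fun i : 'I_K => locally_learned_loss (learned i) e0)).
by move=> t small [i /= iK Ui]; exact: (small (Ordinal iK) Ui).
Qed.

End local_learning.

Section cesaro.
Context {R : realType}.

Lemma sum_early_indicator (M : R) (t0 T : nat) : (t0 <= T)%N ->
  \sum_(t < T) (if (t < t0)%N then M else 0) = t0%:R * M.
Proof.
move=> t0T; rewrite -big_mkcond /= -(big_mkord (fun t => (t < t0)%N)).
by rewrite -(big_nat_widen 0 t0 T xpredT) // sumr_const_nat subn0 mulr_natl.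
Qed.

(* Splitting the times before T into the first t0 ones, the bad ones and the
   good ones, where the sequence is at most e from time t0 on. *)
Lemma sum_le_split {a : nat -> R} {M e : R} {t0 T : nat} {bad : nat -> bool} :
  (forall t, a t <= M) -> 0 <= M -> 0 <= e ->
  (forall t, (t0 <= t)%N -> ~~ bad t -> a t <= e) -> (t0 <= T)%N ->
  \sum_(t < T) a t <= t0%:R * M + T%:R * e + #|[set t : 'I_T | bad t]%SET|%:R * M.
Proof.
move=> a_le M0 e0 good t0T.
have pointwise (t : 'I_T) :
    a t <= ((if (t < t0)%N then M else 0) + e) + (if bad t then M else 0).
  have bad_ge0 : 0 <= (if bad t then M else 0) by case: ifP.
  case: ltnP => [_|t0t]; first by rewrite -addrA ler_wpDr ?addr_ge0.
  rewrite add0r; case: ifPn => [_|notbad]; first by rewrite ler_wpDl.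
  by rewrite addr0; exact: good.
apply: (le_trans (ler_sum _ (fun t _ => pointwise t))).
rewrite !big_split /= sum_early_indicator // -big_mkcond /= !sumr_const card_ord.
by rewrite -[e *+ T]mulr_natl -[M *+ _]mulr_natl -cardsE.
Qed.

Lemma cesaro_vanish (a : nat -> R) (M : R) :
  (forall t, 0 <= a t) -> (forall t, a t <= M) ->
  (forall e, 0 < e -> exists bad : nat -> bool,
     (\forall t \near \oo, ~~ bad t -> a t <= e) /\
     (\forall T \near \oo, M * #|[set t : 'I_T | bad t]%SET|%:R <= e * T%:R)) ->
  (fun T => T%:R^-1 * \sum_(t < T) a t) @ \oo --> 0.
Proof.
move=> a_ge0 a_le sparse_bad; have M0 : 0 <= M := le_trans (a_ge0 0%N) (a_le 0%N).
apply/cvgrPdist_le => eta eta0; set e := eta / 3.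
have e0 : 0 < e by rewrite divr_gt0.
have [bad [[t0 _ good] rare]] := sparse_bad e e0.
near=> T.
have T0 : (0 < T)%N by near: T; exact: nbhs_infty_gt.
have t0T : (t0 <= T)%N by near: T; exact: nbhs_infty_ge.
have early : t0%:R * M <= e * T%:R.
  rewrite mulrC -ler_pdivrMl //; apply/ltW; near: T; exact: nbhs_infty_gtr.
have few_bad : M * #|[set t : 'I_T | bad t]%SET|%:R <= e * T%:R by near: T.
rewrite sub0r normrN ger0_norm ?mulr_ge0 ?invr_ge0 ?sumr_ge0 //.
rewrite ler_pdivrMl ?ltr0n //.
apply: (le_trans (sum_le_split a_le M0 (ltW e0) good t0T)).
have -> : T%:R * eta = e * T%:R + T%:R * e + e * T%:R by rewrite /e; field.
by apply: lerD; [exact: lerD | rewrite mulrC].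
Unshelve. all: end_near.
Qed.

End cesaro.

Theorem theorem3 (R : realType) (d : measure_display) (X : measurableType d)
  (Y : Type) (nu : {finite_measure set X -> \bar R})
  (l : X -> Y -> Y -> R)
  (l_ge0 : forall x y y', 0 <= l x y y')
  (l_bounded : exists M : R, forall x y y', l x y y' <= M)
  (l_diag : forall x y, l x y y = 0)
  (c : X -> Y) (A : seq (X * Y) -> X -> Y)
  (A_OLC : OLC nu l A c)
  (adv : seq X -> probability X R)
  (adv_dom : uniformly_dominates nu (range adv))
  (d' : measure_display) (Omega : measurableType d') (P : probability Omega R)
  (x : nat -> Omega -> X)
  (x_gen : generated_by P adv x) :
  {ae P, forall w,
    (fun T : nat => (T%:R)^-1 *
       \sum_(t < T) l (x t w) (c (x t w)) (hyp A c (fun s => x s w) t (x t w)))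
      @ \oo --> 0}.
Proof.
have [M l_le] := l_bounded.
have [U [mU [learned U_cover]]] := A_OLC.
have /choice[K adv_small] : forall q : nat, exists K, forall s : seq X,
    (adv s (uncovered U K) <= ((8^-1) ^+ q.+1 : R)%:E)%E.
  move=> q; have [|K small] := @uniform_small_uncovered R _ _ nu U mU U_cover _
    ((8^-1) ^+ q.+1) adv_dom.
    by rewrite exprn_gt0 // invr_gt0.
  by exists K => s; apply: small; exact: imageT.
have rare (q : nat) := rare_visits_ae R P adv x x_gen _ _
  (measurable_uncovered _ mU (K q)) (adv_small q) q (lexx _).
(* Fix an outcome w on which, for every q, the visits to [uncovered U (K q)]
   eventually have frequency below 1/(q+1); these visits are the bad times. *)
apply: filterS (ae_forall_nat P rare) => w rare_w.
pose loss t := l (x t w) (c (x t w)) (hyp A c (fun s => x s w) t (x t w)).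
apply: (cesaro_vanish loss M (fun t => l_ge0 _ _ _) (fun t => l_le _ _ _)) => e e0.
have [q Mq] : exists q : nat, M <= q.+1%:R * e.
  have [n _ Mn] := nbhs_infty_gtr (M / e).
  by exists n; rewrite -ler_pdivrMr //; exact/ltW/Mn/leqnSn.
exists (fun t => `[< uncovered U (K q) (x t w) >]); split.
- apply: filterS (covered_loss_small l A c (fun s => x s w) U (K q) e learned e0).
  by move=> t small /asboolPn covered; apply: small; exact: contrapT.
- apply: filterS (rare_w q) => T /ltnW few.
  apply: (le_trans (ler_wpM2r (ler0n _ _) Mq)).
  by rewrite mulrAC -natrM mulrC ler_wpM2l ?(ltW e0) // ler_nat.
Qed.
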